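(* Let $\Phi$ be an $m\times n$ matrix with entries in $\{0,1\}$ such that every column contains exactly $d$ ones, and let $G=(A,B,E)$ be the bipartite graph with $A=\{1,\dots,n\}$ (columns), $B=\{1,\dots,m\}$ (rows) and $(i,j)\in E$ iff $\Phi_{j,i}=1$. Suppose that for some scaling factor $S>0$ the matrix $S\Phi$ satisfies the $\mathrm{RIP}_{1,s,\delta}$ property. Then $G$ (whose adjacency matrix is $\Phi$) is an $(s,\epsilon)$-unbalanced expander with $$\epsilon=\Big(1-\frac{1}{1+\delta}\Big)\Big/\big(2-\sqrt2\big).$$
   Context: An $m\times n$ matrix $M$ satisfies $\mathrm{RIP}_{p,k,\delta}$ if for every $k$-sparse $x\in\mathbb{R}^n$ (at most $k$ nonzero coordinates), $\|x\|_p\le\|Mx\|_p\le(1+\delta)\|x\|_p$. A $(k,\epsilon)$-unbalanced expander is a simple bipartite graph $G=(A,B,E)$ in which every vertex of $A$ has exactly $d$ neighbours (left degree $d$) such that for every $X\subseteq A$ with $|X|\le k$, the neighbourhood $N(X)\subseteq B$ satisfies $|N(X)|\ge(1-\epsilon)d|X|$. *)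

(* Reals are modelled by an arbitrary real closed field R
   (needed for sqrt 2). *)
From HB Require Import structures.
From mathcomp Require Import all_boot all_order all_algebra.
Set Implicit Arguments. Unset Strict Implicit. Unset Printing Implicit Defensive.
Import Order.TTheory GRing.Theory Num.Theory.
Local Open Scope ring_scope.

Definition norm1 (R : numDomainType) (n : nat) (x : 'cV[R]_n) : R :=
  \sum_(i < n) `|x i ord0|.

Definition ksparse (R : numDomainType) (n k : nat) (x : 'cV[R]_n) : Prop :=
  (#|[set i : 'I_n | x i ord0 != 0%R]| <= k)%N.

Definition RIP1 (R : numDomainType) (m n : nat) (M : 'M[R]_(m, n)) (k : nat) (delta : R) : Prop :=
  forall x : 'cV[R]_n, ksparse k x ->
    norm1 x <= norm1 (M *m x) /\ norm1 (M *m x) <= (1 + delta) * norm1 x.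

Definition nbhd (n m : nat) (E : 'I_n -> 'I_m -> bool) (X : {set 'I_n}) : {set 'I_m} :=
  [set b : 'I_m | [exists a in X, E a b]].

Definition unbalanced_expander (R : numDomainType) (n m : nat)
    (E : 'I_n -> 'I_m -> bool) (d k : nat) (eps : R) : Prop :=
  (forall a : 'I_n, #|[set b : 'I_m | E a b]| = d) /\
  (forall X : {set 'I_n}, (#|X| <= k)%N ->
     (1 - eps) * d%:R * #|X|%:R <= #|nbhd E X|%:R).

Definition graph_of (R : numDomainType) (m n : nat) (Phi : 'M[R]_(m, n)) : 'I_n -> 'I_m -> bool :=
  fun i j => Phi j i == 1.

From HB Require Import structures.
From mathcomp Require Import all_boot all_order all_algebra.
From mathcomp Require Import ring lra.
Import Order.TTheory GRing.Theory Num.Theory.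
Local Open Scope ring_scope.
Set Implicit Arguments. Unset Strict Implicit. Unset Printing Implicit Defensive.

(* Fix X with |X| <= s and, for every row j, let C_j (called
   hits j below) be the set of columns of X having a one in row j.  Then
   N(X) = {j | C_j <> 0} and sum_j |C_j| = d|X|.  Apply the RIP inequalities to two test vectors:
   - the indicator vector of X gives  S d|X| <= (1+delta)|X|  and
     |X| <= S d|X|;
   - a signed indicator of X, with signs f in {+1,-1}^n, gives
     |X| <= S * sum_j |sum_(i in C_j) f_i|.
   Averaged over all f, the square of a sum of c signs has mean c, so its
   absolute value has mean at most sqrt c <= (sqrt2 - 1) c + (2 - sqrt2)
   (the chord of the concave square root through c = 1 and c = 2).  Hence
   some f achieves sum_j |...| <= (sqrt2 - 1) d|X| + (2 - sqrt2) |N(X)|, and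
   elementary algebra turns the three inequalities into the expansion bound. *)

Lemma exists_le_mean (R : realDomainType) (T : finType) (F : T -> R) (G : R)
    (x0 : T) :
  \sum_x F x <= #|T|%:R * G -> exists x, F x <= G.
Proof.
move=> sumF; have [/existsP //|/existsPn allgt] := boolP [exists x, F x <= G].
have : #|T|%:R * G < \sum_x F x.
  rewrite mulr_natl -sumr_const.
  apply: ltr_sum; last by move=> x _; rewrite ltNge allgt.
  by apply/hasP; exists x0; rewrite ?mem_index_enum.
by rewrite ltNge sumF.
Qed.

Section SignMoments.
Variables (R : numDomainType) (n : nat).

Definition sign (b : bool) : R := if b then 1 else -1.

Lemma sign_sq (b : bool) : sign b * sign b = 1.
Proof. by case: b; rewrite /sign ?mulrNN mulr1. Qed.

Definition flip (i : 'I_n) (f : {ffun 'I_n -> bool}) : {ffun 'I_n -> bool} :=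
  [ffun t => if t == i then ~~ f t else f t].

Lemma flipK (i : 'I_n) : involutive (flip i).
Proof.
move=> f; apply/ffunP => t; rewrite !ffunE.
by case: eqP => [->|_]; rewrite ?negbK ?eqxx.
Qed.

(* Distinct coordinates of a uniform sign pattern are uncorrelated:
   flipping coordinate i changes the sign of every term. *)
Lemma sum_sign_mul (i k : 'I_n) : i != k ->
  \sum_(f : {ffun 'I_n -> bool}) sign (f i) * sign (f k) = 0.
Proof.
move=> neq_ik; apply/eqP; rewrite -eqNr; apply/eqP.
rewrite -sumrN (reindex_inj (inv_inj (flipK i))) /=.
apply: eq_bigr => f _; rewrite !ffunE eqxx eq_sym (negbTE neq_ik).
by case: (f i); rewrite /sign /= ?mulN1r ?mul1r ?opprK.
Qed.

Lemma sum_sign_sumsq (C : {set 'I_n}) :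
  \sum_(f : {ffun 'I_n -> bool}) (\sum_(i in C) sign (f i)) ^+ 2 =
  #|C|%:R * #|{ffun 'I_n -> bool}|%:R.
Proof.
under eq_bigr => f _ do rewrite expr2 mulr_suml.
under eq_bigr => f _ do under eq_bigr => i _ do rewrite mulr_sumr.
rewrite exchange_big /= -sum1_card natr_sum mulr_suml.
apply: eq_bigr => i iC; rewrite exchange_big /= (bigD1 i) //= [X in _ + X]big1 ?addr0.
  by under eq_bigr => f _ do rewrite sign_sq; rewrite sumr_const mul1r.
by move=> k /andP [_ neq_ki]; rewrite sum_sign_mul // eq_sym.
Qed.

End SignMoments.

(* First moment from second moment: if the squares y_i^2 have mean c > 0,
   then the |y_i| have mean at most sqrt c (termwise AM-GM with sqrt c). *)
Lemma sum_abs_le_sqrt (R : rcfType) (I : finType) (y : I -> R) (c : R) :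
  0 < c -> \sum_i y i ^+ 2 = c * #|I|%:R ->
  \sum_i `|y i| <= #|I|%:R * Num.sqrt c.
Proof.
move=> c_gt0 sum_sq; set t := Num.sqrt c.
have t_gt0 : 0 < t by rewrite sqrtr_gt0.
have tt : t * t = c by rewrite -expr2 sqr_sqrtr // ltW.
have amgm i : 2 * t * `|y i| <= y i ^+ 2 + t * t.
  rewrite -real_normK ?num_real //; have := sqr_ge0 (`|y i| - t); nra.
have : 2 * t * \sum_i `|y i| <= 2 * t * (#|I|%:R * t).
  rewrite mulr_sumr; apply: le_trans (ler_sum _ (fun i _ => amgm i)) _.
  rewrite big_split /= sum_sq sumr_const -mulr_natr -tt; lra.
by rewrite ler_pM2l ?mulr_gt0.
Qed.

(* The chord of the square root through the points c = 1 and c = 2. *)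
Definition sqrt_chord (R : rcfType) (c : nat) : R :=
  (Num.sqrt 2 - 1) * c%:R + (2 - Num.sqrt 2).

(* On positive integers the concave square root lies below that chord:
   with u = sqrt c, chord - u = (u - 1) ((sqrt2 - 1) u - (2 - sqrt2)),
   and both factors are nonnegative since u = 1 or u >= sqrt2. *)
Lemma sqrt_le_chord (R : rcfType) (c : nat) : (0 < c)%N ->
  Num.sqrt (c%:R : R) <= sqrt_chord R c.
Proof.
move=> c_gt0; rewrite /sqrt_chord.
set u := Num.sqrt (c%:R : R); set r := Num.sqrt (2 : R).
have uu : c%:R = u * u by rewrite -expr2 sqr_sqrtr ?ler0n.
have rr : r * r = 2 by rewrite -expr2 sqr_sqrtr ?ler0n.
have r_ge1 : 1 <= r by rewrite -sqrtr1 ler_sqrt // ler1n.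
have u_cases : u = 1 \/ r <= u.
  case: c c_gt0 @u uu => [//|[|c]] _ u _; first by left; rewrite /u sqrtr1.
  by right; rewrite /u /r ler_sqrt // ler_nat.
rewrite uu; case: u_cases => [->|]; nra.
Qed.

Lemma sum_abs_sign_le_chord (R : rcfType) (n : nat) (C : {set 'I_n}) :
  (0 < #|C|)%N ->
  \sum_(f : {ffun 'I_n -> bool}) `|\sum_(i in C) sign R (f i)| <=
  #|{ffun 'I_n -> bool}|%:R * sqrt_chord R #|C|.
Proof.
move=> C_gt0; apply: le_trans (ler_wpM2l (ler0n _ _) (sqrt_le_chord R C_gt0)).
by apply: sum_abs_le_sqrt; rewrite ?ltr0n ?sum_sign_sumsq.
Qed.

Section TestVectors.
Variables (R : numDomainType) (m n : nat) (Phi : 'M[R]_(m, n)).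
Variable X : {set 'I_n}.

Definition supp_vec (v : 'I_n -> R) : 'cV[R]_n :=
  \col_i (if i \in X then v i else 0).

Definition hits (j : 'I_m) : {set 'I_n} := [set i in X | Phi j i == 1].

Lemma supp_vec_sparse (s : nat) (v : 'I_n -> R) :
  (#|X| <= s)%N -> ksparse s (supp_vec v).
Proof.
move=> X_le_s; apply: leq_trans X_le_s; apply: subset_leq_card.
by apply/subsetP => i; rewrite !inE mxE; case: (i \in X); rewrite ?eqxx.
Qed.

Lemma norm1_supp_vec (v : 'I_n -> R) :
  (forall i, `|v i| = 1) -> norm1 (supp_vec v) = #|X|%:R.
Proof.
move=> v_unit; rewrite /norm1 (eq_bigr (fun i => if i \in X then 1 else 0)).
  by rewrite -big_mkcond /= sumr_const.
by move=> i _; rewrite mxE; case: (i \in X); rewrite ?v_unit ?normr0.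
Qed.

Hypothesis Phi01 : forall j i, Phi j i = 0 \/ Phi j i = 1.

Lemma mul_supp_vec (S : R) (v : 'I_n -> R) (j : 'I_m) :
  ((S *: Phi) *m supp_vec v) j ord0 = S * \sum_(i in hits j) v i.
Proof.
rewrite mxE mulr_sumr [RHS]big_mkcond /=; apply: eq_bigr => i _.
rewrite !mxE inE; case: (Phi01 j i) => ->.
  by rewrite eq_sym oner_eq0 andbF mulr0 mul0r.
by rewrite eqxx andbT mulr1; case: (i \in X); rewrite ?mulr0.
Qed.

Lemma norm1_mul_supp_vec (S : R) (v : 'I_n -> R) : 0 < S ->
  norm1 ((S *: Phi) *m supp_vec v) = S * \sum_j `|\sum_(i in hits j) v i|.
Proof.
move=> S_gt0; rewrite /norm1 mulr_sumr; apply: eq_bigr => j _.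
by rewrite mul_supp_vec normrM gtr0_norm.
Qed.

End TestVectors.

(* Double counting of the ones of Phi in the columns of X. *)
Lemma sum_card_hits (R : numDomainType) (m n d : nat) (Phi : 'M[R]_(m, n))
    (X : {set 'I_n}) :
  (forall i, #|[set j | Phi j i == 1]| = d) ->
  (\sum_j #|hits Phi X j| = #|X| * d)%N.
Proof.
move=> col_deg; rewrite /hits.
under eq_bigr => j _ do rewrite -sum1_card big_mkcond /=.
rewrite exchange_big /= -sum1_card big_distrl /= [RHS]big_mkcond /=.
apply: eq_bigr => i _; case: (boolP (i \in X)) => iX /=.
  rewrite mul1n -(col_deg i) -sum1_card [RHS]big_mkcond /=.
  by apply: eq_bigr => j _; rewrite !inE iX.
by rewrite big1 // => j _; rewrite inE (negbTE iX).
Qed.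

Lemma card_nbhd_hits (R : numDomainType) (m n : nat) (Phi : 'M[R]_(m, n))
    (X : {set 'I_n}) :
  #|nbhd (graph_of Phi) X| = #|[set j | (0 < #|hits Phi X j|)%N]|.
Proof.
apply: eq_card => j; rewrite !inE card_gt0.
apply/existsP/set0Pn => [[a /andP [aX ha]] | [a]].
  by exists a; rewrite inE aX.
by rewrite inE => /andP [aX ha]; exists a; rewrite aX.
Qed.

Lemma exists_good_signs (R : rcfType) (m n : nat) (C : 'I_m -> {set 'I_n}) :
  exists f : {ffun 'I_n -> bool},
    \sum_j `|\sum_(i in C j) sign R (f i)| <=
    \sum_j (if (0 < #|C j|)%N then sqrt_chord R #|C j| else 0).
Proof.
apply: (exists_le_mean [ffun=> true]).
rewrite exchange_big mulr_sumr; apply: ler_sum => j _.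
have [C0|C_gt0] := posnP #|C j|; last exact: sum_abs_sign_le_chord.
by rewrite (cards0_eq C0) mulr0 big1 // => f _; rewrite big_set0 normr0.
Qed.

Lemma sum_sqrt_chord (R : rcfType) (m : nat) (c : 'I_m -> nat) :
  \sum_j (if (0 < c j)%N then sqrt_chord R (c j) else 0) =
  (Num.sqrt 2 - 1) * (\sum_j c j)%N%:R +
  (2 - Num.sqrt 2) * #|[set j | (0 < c j)%N]|%:R.
Proof.
rewrite -sum1_card !natr_sum !mulr_sumr [X in _ + X]big_mkcond -big_split /=.
apply: eq_bigr => j _; rewrite inE /sqrt_chord.
by case: posnP => [->|_]; rewrite ?mulr0 ?addr0 ?mulr1.
Qed.

(* The closing algebra.  With G = (1 - a) D + a N, the three test-vector
   inequalities  S D <= q x,  x <= S D  and  x <= S G  give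
   D <= q G, i.e.  (1 - (1 - 1/q)/a) D <= N. *)
Lemma expansion_algebra (R : realFieldType) (S q x D N a : R) :
  0 < S -> 0 < x -> 0 < a ->
  S * D <= q * x -> x <= S * D -> x <= S * ((1 - a) * D + a * N) ->
  (1 - (1 - q^-1) / a) * D <= N.
Proof.
move=> S_gt0 x_gt0 a_gt0 upper lower signed.
have q_gt0 : 0 < q by rewrite -(pmulr_lgt0 _ x_gt0); lra.
have D_le : D <= q * ((1 - a) * D + a * N).
  rewrite -(ler_pM2l S_gt0) mulrCA; apply: le_trans upper _.
  by rewrite ler_pM2l.
rewrite -(ler_pM2l (mulr_gt0 a_gt0 q_gt0)).
have -> : a * q * ((1 - (1 - q^-1) / a) * D) = a * q * D - q * D + D.
  by field; rewrite ?gt_eqF.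
nra.
Qed.

Unset Implicit Arguments.

Theorem theorem2 (R : rcfType) (m n d s : nat) (Phi : 'M[R]_(m, n)) (S delta : R) :
  (forall (j : 'I_m) (i : 'I_n), Phi j i = 0 \/ Phi j i = 1) ->
  (forall i : 'I_n, #|[set j : 'I_m | Phi j i == 1]| = d) ->
  0 < S ->
  RIP1 (S *: Phi) s delta ->
  unbalanced_expander (graph_of Phi) d s
    ((1 - (1 + delta)^-1) / (2 - Num.sqrt 2)).
Proof.
move=> Phi01 col_deg S_gt0 rip; split => [//|X X_le_s].
have [X0|X_gt0] := posnP #|X|; first by rewrite X0 mulr0 ler0n.
have a_gt0 : 0 < 2 - Num.sqrt (2 : R).
  have rr : Num.sqrt (2 : R) * Num.sqrt 2 = 2 by rewrite -expr2 sqr_sqrtr.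
  have := sqrtr_ge0 (2 : R); nra.
set D := (\sum_j #|hits Phi X j|)%N.
have [lower upper] := rip _ (supp_vec_sparse (fun=> 1) X_le_s).
rewrite norm1_supp_vec ?normr1 // norm1_mul_supp_vec // in lower upper.
have count_ones : \sum_j `|\sum_(i in hits Phi X j) (1 : R)| = D%:R.
  by rewrite natr_sum; apply: eq_bigr => j _; rewrite sumr_const normr_nat.
rewrite count_ones in lower upper.
have [f good] := exists_good_signs R (hits Phi X).
have [signed _] := rip _ (supp_vec_sparse (fun i => sign R (f i)) X_le_s).
have sign_unit i : `|sign R (f i)| = 1 by case: (f i); rewrite ?normrN normr1.
rewrite norm1_supp_vec // norm1_mul_supp_vec // in signed.
have {good}signed := le_trans signed (ler_wpM2l (ltW S_gt0) good).
have slope : Num.sqrt (2 : R) - 1 = 1 - (2 - Num.sqrt 2) by ring.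
rewrite sum_sqrt_chord -card_nbhd_hits -/D slope in signed.
have := expansion_algebra S_gt0 _ a_gt0 upper lower signed.
rewrite ltr0n X_gt0 /D (sum_card_hits X col_deg) natrM mulrA => /(_ isT).
by rewrite mulrAC.
Qed.
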